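(* Let $A^+,A^-\in\mathbb{R}_{\max}^{m\times n}$, $C\in\mathbb{R}_{\max}^{p\times n}$, $\mu^+\in\mathbb{Z}_{\ge0}^p$, $\mu^-\in\mathbb{Z}_{\ge0}^n$ satisfy the standing assumptions below, and let $f$ and $S$ be as defined below. If $x\in S\cap\mathbb{R}^n$ is not a local optimum, then there exist $J\subset[n]$ and $\delta'>0$ such that $x+\delta\chi_J\in S$ and $f(x+\delta\chi_J)<f(x)$ for all $0<\delta<\delta'$.
   Context: $\mathbb{R}_{\max}=\mathbb{R}\cup\{-\infty\}$, $[n]=\{1,\dots,n\}$, and $\chi_J\in\{0,1\}^n$ is the indicator vector of $J$. Write $A^\pm=(a^\pm_{i,j})$, $C=(c_{k,j})$, and $A=(a_{i,j})$ with $a_{i,j}=\max(a^+_{i,j},a^-_{i,j})$. The objective is $f(x)=\sum_{k=1}^p\mu^+_k\max_{j\in[n]}(c_{k,j}+x_j)-\sum_{j=1}^n\mu^-_jx_j$, and the feasible set is $S=\{x\in\mathbb{R}_{\max}^n:\max_j(a^+_{i,j}+x_j)\ge\max_j(a^-_{i,j}+x_j)\text{ for all }i\in[m]\}$. Standing assumptions: every row of $A$ and of $C$ contains a finite entry; $\sum_{k}\mu^+_k=\sum_j\mu^-_j$; the undirected graph with vertex set $\{u_1,\dots,u_p\}\cup[n]\cup\{w_1,\dots,w_m\}$ and edges $\{u_k,j\}$ for $c_{k,j}\ne-\infty$ and $\{w_i,j\}$ for $a_{i,j}\ne-\infty$ is connected. A point $x\in S\cap\mathbb{R}^n$ is a local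 optimum if there is $\delta>0$ such that $f(y)\ge f(x)$ for all $y\in S\cap\mathbb{R}^n$ with $\max_j|x_j-y_j|<\delta$. *)

From HB Require Import structures.
From mathcomp Require Import all_boot all_order all_algebra.
From mathcomp Require Import reals constructive_ereal.
Set Implicit Arguments. Unset Strict Implicit. Unset Printing Implicit Defensive.
Import Order.TTheory GRing.Theory Num.Theory.
Local Open Scope ring_scope.
Local Open Scope ereal_scope.

Section Defs.
Variable R : realType.

(* an entry of R_max = R ∪ {-oo} *)
Definition rmax_entry (a : \bar R) : Prop := a != +oo.

Definition rowmax {m n : nat} (M : 'M[\bar R]_(m, n)) (x : 'I_n -> R) (i : 'I_m)
  : \bar R := \big[Order.max/-oo]_(j < n) (M i j + (x j)%:E).

Definition Amax {m n : nat} (Ap Am : 'M[\bar R]_(m, n)) : 'M[\bar R]_(m, n) :=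
  \matrix_(i, j) Order.max (Ap i j) (Am i j).

Definition inS {m n : nat} (Ap Am : 'M[\bar R]_(m, n)) (x : 'I_n -> R) : Prop :=
  forall i : 'I_m, rowmax Am x i <= rowmax Ap x i.

(* the objective; rows of C have a finite entry, so each max is finite *)
Definition fobj {p n : nat} (C : 'M[\bar R]_(p, n)) (mup : 'I_p -> nat)
  (mum : 'I_n -> nat) (x : 'I_n -> R) : R :=
  (\sum_(k < p) (mup k)%:R * fine (rowmax C x k)
   - \sum_(j < n) (mum j)%:R * x j)%R.

Definition local_opt {m n p : nat} (Ap Am : 'M[\bar R]_(m, n))
  (C : 'M[\bar R]_(p, n)) (mup : 'I_p -> nat) (mum : 'I_n -> nat)
  (x : 'I_n -> R) : Prop :=
  inS Ap Am x /\
  exists delta : R, (0 < delta)%R /\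
    forall y : 'I_n -> R, inS Ap Am y ->
      (forall j, `|x j - y j| < delta)%R ->
      (fobj C mup mum x <= fobj C mup mum y)%R.

Definition chi {n : nat} (J : {set 'I_n}) (j : 'I_n) : R :=
  if j \in J then 1%R else 0%R.

End Defs.

(* vertices u_k, j, w_i of the bipartite graph *)
Definition vert (p n m : nat) : finType := (('I_p + 'I_n) + 'I_m)%type.

Definition graph_edge (R : realType) {m n p : nat} (A : 'M[\bar R]_(m, n))
  (C : 'M[\bar R]_(p, n)) : rel (vert p n m) :=
  fun u v =>
    match u, v with
    | inl (inl k), inl (inr j) => C k j != -oo
    | inl (inr j), inl (inl k) => C k j != -oo
    | inr i, inl (inr j) => A i j != -oo
    | inl (inr j), inr i => A i j != -oo
    | _, _ => false
    end.

Definition graph_connected (R : realType) {m n p : nat} (A : 'M[\bar R]_(m, n))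
  (C : 'M[\bar R]_(p, n)) : Prop :=
  forall u v : vert p n m, connect (graph_edge A C) u v.

From mathcomp Require Import all_boot all_order all_algebra.
From mathcomp Require Import reals constructive_ereal ring lra.
From Stdlib Require Import Classical FunctionalExtensionality.
Set Implicit Arguments. Unset Strict Implicit. Unset Printing Implicit Defensive.
Import Order.TTheory GRing.Theory Num.Theory.
Local Open Scope ring_scope.

(* Near x, a row maximum max_j (a_j + y_j) with finite value r equals
   r + max_{j in N} (y_j - x_j), where N is the set of indices attaining it at x.
   Hence, locally, f(y) = f(x) + g(y - x) and y lies in S iff y - x lies in a cone K
   ([dfobj] and [tangent_cone] below).  Both only see the order of the coordinates
   of d = y - x: K is stable under nondecreasing reparametrisations of d, and g,
   a nonnegative combination of maxima over fixed index sets minus a linear form,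
   is additive on comonotone sums and vanishes on constants since
   sum mu+ = sum mu-.  Cutting d below its top value t at the next value s gives
   d = min(d, s) + (t - s) chi_J with J the top level set, so g(d) < 0 forces
   g(chi_J) < 0 or g(min(d, s)) < 0.  Induction on the number of levels of d thus
   turns a descent direction d in K into an indicator chi_J in K with g(chi_J) < 0,
   and x + delta chi_J descends for all small delta. *)

Section MaxOver.
Variables (R : realType) (n : nat).
Implicit Types (P : pred 'I_n) (d : 'I_n -> R).

(* [fine] sends the empty maximum [-oo] to 0, hence the nonemptiness
   assumptions [P j0] below. *)
Definition maxover P d : R := fine (\big[Order.max/-oo%E]_(j | P j) (d j)%:E).

Definition is_maxover P d (h : R) :=
  (exists2 j, P j & h = d j) /\ (forall j, P j -> d j <= h).

Lemma maxoverP P d {j0} : P j0 -> is_maxover P d (maxover P d).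
Proof.
move=> Pj0; rewrite /maxover.
have [i Pi max_i] := eq_bigmax j0 P (fun j => (d j)%:E) Pj0 (fun i _ => leNye _).
rewrite max_i /=; split=> [|j Pj]; first by exists i.
by rewrite -lee_fin -max_i; apply: le_bigmax_cond.
Qed.

Lemma maxover_eq P d h : is_maxover P d h -> maxover P d = h.
Proof.
move=> [[j Pj ->] le_h]; have [[j' Pj' ->] le_h'] := maxoverP d Pj.
by apply/le_anti; rewrite le_h // le_h'.
Qed.

Lemma maxover_homo P d (phi : R -> R) {j0} : P j0 ->
  {homo phi : a b / a <= b} -> maxover P (fun j => phi (d j)) = phi (maxover P d).
Proof.
move=> Pj0 phi_homo; have [[j Pj ->] le_dj] := maxoverP d Pj0.
by apply: maxover_eq; split=> [|j' Pj']; [exists j | apply/phi_homo/le_dj].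
Qed.

Lemma maxover_const P (c : R) {j0} : P j0 -> maxover P (fun=> c) = c.
Proof. by move=> Pj0; apply: maxover_eq; split=> //; exists j0. Qed.

Lemma maxover_norm_lt P d e {j0} : P j0 -> (forall j, `|d j| < e) -> `|maxover P d| < e.
Proof. by move=> Pj0 d_lt; have [[j _ ->] _] := maxoverP d Pj0. Qed.

End MaxOver.

Section Locally.
Variables (R : realType) (n : nat) (x : 'I_n -> R).

Definition locally (Q : ('I_n -> R) -> Prop) :=
  exists2 e : R, 0 < e & forall y, (forall j, `|y j - x j| < e) -> Q y.

Lemma locally_ball e : 0 < e -> locally (fun y => forall j, `|y j - x j| < e).
Proof. by move=> e_gt0; exists e. Qed.

Lemma locally_mono {Q Q' : ('I_n -> R) -> Prop} :
  (forall y, Q y -> Q' y) -> locally Q -> locally Q'.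
Proof. by move=> QQ' [e e_gt0 Qe]; exists e => // y /Qe/QQ'. Qed.

Lemma locally_and {Q1 Q2} : locally Q1 -> locally Q2 -> locally (fun y => Q1 y /\ Q2 y).
Proof.
move=> [e1 e1_gt0 Q1e] [e2 e2_gt0 Q2e]; exists (Num.min e1 e2).
  by rewrite lt_min e1_gt0.
move=> y xy; split; [apply: Q1e | apply: Q2e] => j;
  by apply: lt_le_trans (xy j) _; rewrite ge_min lexx ?orbT.
Qed.

Lemma locally_forall (I : finType) (Q : I -> ('I_n -> R) -> Prop) :
  (forall i, locally (Q i)) -> locally (fun y => forall i, Q i y).
Proof.
move=> Qloc; suff enum_loc : locally (fun y => forall i, i \in enum I -> Q i y).
  by apply: locally_mono enum_loc => y Qy i; apply: Qy; rewrite mem_enum.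
elim: (enum I) => [|i s IHs]; first by exists 1.
apply: locally_mono (locally_and (Qloc i) IHs) => y [Qiy Qsy] k.
by rewrite inE => /predU1P[-> | /Qsy].
Qed.

End Locally.

Section RowMax.
Variables (R : realType) (q n : nat) (M : 'M[\bar R]_(q, n)).
Local Open Scope ereal_scope.

Definition argmax_row (x : 'I_n -> R) i : pred 'I_n :=
  fun j => M i j + (x j)%:E == rowmax M x i.

Lemma argmax_rowP {x i} : rowmax M x i != -oo -> exists j, argmax_row x i j.
Proof.
case: (pickP (fun _ : 'I_n => true)) => [j0 _ _ | no_index]; last first.
  by rewrite /rowmax big1 // => j; have := no_index j.
have [j _ max_j] := eq_bigmax j0 predT (fun j => M i j + (x j)%:E) isT (fun j _ => leNye _).
by exists j; rewrite /argmax_row /rowmax max_j.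
Qed.

Lemma rowmax_fin x i : (forall j, M i j != +oo) -> rowmax M x i != -oo ->
  exists r : R, rowmax M x i = r%:E.
Proof.
move=> M_fin max_fin; have [j /eqP max_j] := argmax_rowP max_fin.
move: max_fin (M_fin j); rewrite -max_j.
by case: (M i j) => [s _ _ | // | //]; exists (s + x j)%R.
Qed.

Lemma rowmax_Ny x y i : rowmax M x i = -oo -> rowmax M y i = -oo.
Proof.
move=> max_Ny; apply/eqP; rewrite eq_le leNye andbT; apply: bigmax_le => // j _.
have := le_bigmax -oo (fun j => M i j + (x j)%:E) j.
by rewrite -/(rowmax M x i) max_Ny; case: (M i j).
Qed.

Lemma rowmax_local x i r : (forall j, M i j != +oo) -> rowmax M x i = r%:E ->
  locally x (fun y =>
    rowmax M y i = (r + maxover (argmax_row x i) (fun j => y j - x j))%:E).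
Proof.
move=> M_fin max_r.
pose D (y : 'I_n -> R) := maxover (argmax_row x i) (fun j => (y j - x j)%R).
change (locally x (fun y => rowmax M y i = (r + D y)%:E)).
have [j0 argmax_j0] : exists j, argmax_row x i j by apply: argmax_rowP; rewrite max_r.
have entry_le j : locally x (fun y => M i j + (y j)%:E <= (r + D y)%:E).
  have := le_bigmax -oo (fun j => M i j + (x j)%:E) j.
  rewrite -/(rowmax M x i) max_r; move: (M_fin j) (erefl (argmax_row x i j)).
  rewrite {2}/argmax_row max_r; case: (M i j) => [s _ | // | _ _ _]; last first.
    by exists 1%R => // y _; rewrite leNye.
  rewrite -EFinD eqe lee_fin; case: eqP => [sxj_r argmax_j _ | /eqP sxj_neq _ sxj_le].
    exists 1%R => // y _; rewrite -EFinD lee_fin -sxj_r.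
    have [_ le_D] := maxoverP (fun j => (y j - x j)%R) argmax_j0.
    by have := le_D j argmax_j; rewrite -/(D y); lra.
  have sxj_lt : (s + x j < r)%R by rewrite lt_neqAle sxj_neq.
  have gap_gt0 : (0 < (r - (s + x j)) / 2)%R by lra.
  apply: locally_mono (locally_ball x gap_gt0) => y xy; rewrite -EFinD lee_fin.
  have := maxover_norm_lt argmax_j0 xy; rewrite -/(D y).
  by move: (xy j); rewrite !ltr_norml; lra.
apply: locally_mono (locally_forall entry_le) => y le_D; apply/le_anti.
rewrite bigmax_le ?leNye //=.
have [[j argmax_j D_y] _] := maxoverP (fun j => (y j - x j)%R) argmax_j0.
apply: le_trans (le_bigmax _ (fun j => M i j + (y j)%:E) j).
move: argmax_j (M_fin j); rewrite /argmax_row max_r /D D_y.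
by case: (M i j) => [s /eqP[<-] _ | // | //]; rewrite -!EFinD lee_fin; lra.
Qed.

End RowMax.

Section Linearization.
Variables (R : realType) (m n p : nat) (Ap Am : 'M[\bar R]_(m, n))
  (C : 'M[\bar R]_(p, n)) (mup : 'I_p -> nat) (mum : 'I_n -> nat) (x : 'I_n -> R).
Hypothesis Ap_fin : forall i j, Ap i j != +oo%E.
Hypothesis Am_fin : forall i j, Am i j != +oo%E.
Hypothesis C_fin : forall k j, C k j != +oo%E.
Hypothesis C_row : forall k, exists j, C k j != -oo%E.
Hypothesis mu_sum : (\sum_(k < p) mup k = \sum_(j < n) mum j)%N.
Hypothesis x_in_S : inS Ap Am x.

Definition dfobj (d : 'I_n -> R) : R :=
  \sum_(k < p) (mup k)%:R * maxover (argmax_row C x k) d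
  - \sum_(j < n) (mum j)%:R * d j.

Definition tight_row i := rowmax Am x i = rowmax Ap x i /\ rowmax Ap x i != -oo%E.

Definition tangent_cone (d : 'I_n -> R) := forall i, tight_row i ->
  maxover (argmax_row Am x i) d <= maxover (argmax_row Ap x i) d.

Lemma rowmax_C_neqNy k : rowmax C x k != -oo%E.
Proof.
have [j Ckj] := C_row k; apply/eqP => max_Ny.
have := le_bigmax -oo%E (fun j => C k j + (x j)%:E)%E j.
by rewrite -/(rowmax C x k) max_Ny; move: Ckj; case: (C k j).
Qed.

Lemma argmax_C k : exists j, argmax_row C x k j.
Proof. exact/argmax_rowP/rowmax_C_neqNy. Qed.

Lemma fobj_local : locally x (fun y =>
  fobj C mup mum y = fobj C mup mum x + dfobj (fun j => y j - x j)).
Proof.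
have row_local k : locally x (fun y => fine (rowmax C y k) =
    fine (rowmax C x k) + maxover (argmax_row C x k) (fun j => y j - x j)).
  have [r max_r] := rowmax_fin (C_fin k) (rowmax_C_neqNy k).
  by apply: locally_mono (rowmax_local (C_fin k) max_r) => y ->; rewrite max_r.
apply: locally_mono (locally_forall row_local) => y rows_y.
rewrite /fobj /dfobj; under eq_bigr do rewrite rows_y mulrDr.
have -> : \sum_(j < n) (mum j)%:R * y j =
    \sum_(j < n) (mum j)%:R * x j + \sum_(j < n) (mum j)%:R * (y j - x j).
  by rewrite -big_split; apply: eq_bigr => j _ /=; ring.
rewrite big_split /=; lra.
Qed.

Lemma tight_argmax i : tight_row i ->
  (exists j, argmax_row Am x i j) /\ (exists j, argmax_row Ap x i j).
Proof. by case=> max_eq max_fin; split; apply: argmax_rowP; rewrite ?max_eq. Qed.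

Lemma tangent_cone_homo d (phi : R -> R) : {homo phi : a b / a <= b} ->
  tangent_cone d -> tangent_cone (fun j => phi (d j)).
Proof.
move=> phi_homo cone_d i tight_i; have [[jm Pm] [jp Pp]] := tight_argmax tight_i.
by rewrite (maxover_homo _ Pm phi_homo) (maxover_homo _ Pp phi_homo); apply/phi_homo/cone_d.
Qed.

Lemma inS_row_local i : locally x (fun y =>
  (rowmax Am y i <= rowmax Ap y i)%E <-> (tight_row i ->
    maxover (argmax_row Am x i) (fun j => y j - x j)
    <= maxover (argmax_row Ap x i) (fun j => y j - x j))).
Proof.
have x_row := x_in_S i.
have [max_Ny | max_fin] := eqVneq (rowmax Am x i) -oo%E.
  exists 1 => // y _; rewrite (rowmax_Ny y max_Ny) leNye.
  by split=> // _ [max_eq]; rewrite -max_eq max_Ny eqxx.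
have [rm max_rm] := rowmax_fin (Am_fin i) max_fin.
have [rp max_rp] : exists rp : R, rowmax Ap x i = rp%:E.
  by apply: rowmax_fin (Ap_fin i) _; apply: contraTneq x_row => ->; rewrite max_rm.
have [[jm Pm] [jp Pp]] : (exists j, argmax_row Am x i j) /\ exists j, argmax_row Ap x i j.
  by split; apply: argmax_rowP; rewrite ?max_rm ?max_rp.
have rows_y :=
  locally_and (rowmax_local (Am_fin i) max_rm) (rowmax_local (Ap_fin i) max_rp).
move: x_row; rewrite max_rm max_rp lee_fin le_eqVlt => /orP[/eqP rm_rp | rm_lt].
  apply: locally_mono rows_y => y [-> ->]; rewrite lee_fin rm_rp lerD2l.
  by split=> [// | ]; apply; split; rewrite ?max_rm ?max_rp ?rm_rp.
have gap_gt0 : 0 < (rp - rm) / 2 by lra.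
apply: locally_mono (locally_and rows_y (locally_ball x gap_gt0)) => y [[-> ->] xy].
split=> [_ [] | _].
  by rewrite max_rm max_rp => -[rm_eq]; move: rm_lt; rewrite rm_eq ltxx.
rewrite lee_fin; have := maxover_norm_lt Pm xy; have := maxover_norm_lt Pp xy.
by rewrite !ltr_norml; lra.
Qed.

Lemma inS_local : locally x (fun y => inS Ap Am y <-> tangent_cone (fun j => y j - x j)).
Proof.
apply: locally_mono (locally_forall inS_row_local) => y rows_y.
by split=> [S_y i | cone_y i]; apply/rows_y; [apply: S_y | apply: cone_y].
Qed.

Lemma dfobj_comonotoneD d (phi psi : R -> R) :
  {homo phi : a b / a <= b} -> {homo psi : a b / a <= b} ->
  dfobj (fun j => phi (d j) + psi (d j)) =
  dfobj (fun j => phi (d j)) + dfobj (fun j => psi (d j)).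
Proof.
move=> phi_homo psi_homo.
have sum_homo : {homo (fun u => phi u + psi u) : a b / a <= b}.
  by move=> a b ab; rewrite lerD ?phi_homo ?psi_homo.
have max_sum k : maxover (argmax_row C x k) (fun j => phi (d j) + psi (d j)) =
    maxover (argmax_row C x k) (fun j => phi (d j)) +
    maxover (argmax_row C x k) (fun j => psi (d j)).
  have [j0 Pj0] := argmax_C k.
  by rewrite (maxover_homo d Pj0 sum_homo) !(maxover_homo d Pj0).
rewrite /dfobj; under eq_bigr do rewrite max_sum mulrDr.
under [X in _ - X]eq_bigr do rewrite mulrDr.
rewrite !big_split /=; lra.
Qed.

Lemma dfobj_scale (c : R) d : 0 < c -> dfobj (fun j => c * d j) = c * dfobj d.
Proof.
move=> c_gt0; have scale_homo : {homo *%R c : a b / a <= b}.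
  by move=> a b ab; rewrite ler_pM2l.
rewrite /dfobj mulrBr !mulr_sumr; congr (_ - _); apply: eq_bigr => k _; last first.
  by rewrite mulrCA.
by have [j0 Pj0] := argmax_C k; rewrite (maxover_homo d Pj0 scale_homo) mulrCA.
Qed.

Lemma dfobj_const (c : R) : dfobj (fun=> c) = 0.
Proof.
have max_c k : maxover (argmax_row C x k) (fun=> c) = c.
  by have [j0 Pj0] := argmax_C k; apply: maxover_const Pj0.
rewrite /dfobj; under eq_bigr do rewrite max_c.
by rewrite -!mulr_suml -!natr_sum mu_sum subrr.
Qed.

End Linearization.

Section IndicatorDescent.
Variables (R : realType) (n : nat).
Variables (G : ('I_n -> R) -> R) (K : ('I_n -> R) -> Prop).
Hypothesis K_homo : forall d (phi : R -> R),
  {homo phi : a b / a <= b} -> K d -> K (fun j => phi (d j)).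
Hypothesis G_comonotoneD : forall d (phi psi : R -> R),
  {homo phi : a b / a <= b} -> {homo psi : a b / a <= b} ->
  G (fun j => phi (d j) + psi (d j)) = G (fun j => phi (d j)) + G (fun j => psi (d j)).
Hypothesis G_scale : forall (c : R) d, 0 < c -> G (fun j => c * d j) = c * G d.
Hypothesis G_const : forall c : R, G (fun=> c) = 0.

Definition below_max (d : 'I_n -> R) : {set 'I_n} := [set j | [exists j', d j < d j']].

Lemma below_max0_const d : below_max d = set0 -> d = fun=> maxover predT d.
Proof.
move=> below0; apply: functional_extensionality => j.
have [[jt _ ->] le_t] := maxoverP (P := predT) d (isT : predT j).
have : j \notin below_max d by rewrite below0 in_set0.
rewrite inE negb_exists => /forallP/(_ jt); rewrite -leNgt => le_jt.
by apply/le_anti; rewrite le_t.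
Qed.

Lemma K_indicator d (s : R) : K d -> K (chi R [set j | s < d j]).
Proof.
move=> K_d; have -> : chi R [set j | s < d j] = fun j => (if s < d j then 1 else 0).
  by apply: functional_extensionality => j; rewrite /chi inE.
apply: (K_homo (phi := fun u => if s < u then 1 else 0) _ K_d) => a b ab.
by case: ifP => [sa | _]; [rewrite (lt_le_trans sa ab) | case: ifP].
Qed.

Lemma G_cut_top d (s t : R) : s < t -> (forall j, s < d j -> d j = t) ->
  G d = G (fun j => Num.min (d j) s) + (t - s) * G (chi R [set j | s < d j]).
Proof.
move=> s_lt_t top_t; rewrite -G_scale ?subr_gt0 //.
have -> : (fun j => (t - s) * chi R [set j | s < d j] j) = fun j => Num.max (d j) s - s.
  apply: functional_extensionality => j; rewrite /chi inE.
  by case: ltP => [/top_t -> | le_ds]; rewrite ?mulr1 ?mulr0 ?(max_r le_ds) ?subrr.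
rewrite -(G_comonotoneD d (phi := fun u => Num.min u s) (psi := fun u => Num.max u s - s))
  => [| a b ab | a b ab]; last 2 first.
- exact: le_min2.
- by rewrite lerD2r le_max2.
congr G; apply: functional_extensionality => j.
by case: (leP (d j) s) => [le_ds | /ltW le_sd];
  rewrite ?(min_l le_ds) ?(max_r le_ds) ?(min_r le_sd) ?(max_l le_sd); ring.
Qed.

Lemma below_max_min_proper d (s t : R) j0 :
  d j0 = s -> s < t -> (exists j, d j = t) ->
  below_max (fun j => Num.min (d j) s) \proper below_max d.
Proof.
move=> dj0_s s_lt_t [jt djt_t]; apply/properP; split.
  apply/subsetP => j; rewrite !inE => /existsP[j' min_lt].
  have min_lt_s : Num.min (d j) s < s.
    by apply: lt_le_trans min_lt _; rewrite ge_min lexx orbT.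
  have dj_lt : d j < s by move: min_lt_s; rewrite gt_min ltxx orbF.
  by apply/existsP; exists jt; rewrite djt_t (lt_trans dj_lt).
exists j0; first by rewrite inE; apply/existsP; exists jt; rewrite dj0_s djt_t.
rewrite inE negb_exists; apply/forallP => j'.
by rewrite -leNgt dj0_s minxx ge_min lexx orbT.
Qed.

Lemma indicator_descent d : K d -> G d < 0 ->
  exists J : {set 'I_n}, K (chi R J) /\ G (chi R J) < 0.
Proof.
have [N] := ubnP #|below_max d|; elim: N d => // N IHN d size_d K_d G_d_lt0.
have [below0 | [j0]] := set_0Vmem (below_max d).
  by move: G_d_lt0; rewrite (below_max0_const below0) G_const ltxx.
rewrite inE => /existsP[j1 lt_j0j1].
pose t := maxover predT d; pose s := maxover [pred j | d j < t] d.
have [[jt _ t_def] le_t] := maxoverP (P := predT) d (isT : predT j0).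
have j0_below : d j0 < t := lt_le_trans lt_j0j1 (le_t j1 isT).
have [[js js_below s_def] le_s] := maxoverP (P := [pred j | d j < t]) d j0_below.
have s_lt_t : s < t by rewrite /s s_def.
have top_t j : s < d j -> d j = t.
  move=> lt_sj; apply/le_anti; rewrite le_t //= leNgt; apply: contraTN lt_sj => lt_jt.
  by rewrite -leNgt le_s.
have [G_J_lt0 | G_J_ge0] := ltP (G (chi R [set j | s < d j])) 0.
  by exists [set j | s < d j]; split; first exact: K_indicator.
apply: (IHN (fun j => Num.min (d j) s)).
- rewrite -ltnS; apply: leq_trans size_d; apply: proper_card.
  by apply: (below_max_min_proper (esym s_def) s_lt_t); exists jt.
- by apply: (K_homo (phi := fun u => Num.min u s) _ K_d) => a b ab; apply: le_min2.
- move: G_d_lt0; rewrite (G_cut_top s_lt_t top_t).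
  have : 0 <= (t - s) * G (chi R [set j | s < d j]).
    by apply: mulr_ge0; rewrite // subr_ge0 ltW.
  lra.
Qed.

End IndicatorDescent.

Lemma not_local_opt_descent (R : realType) (m n p : nat) (Ap Am : 'M[\bar R]_(m, n))
    (C : 'M[\bar R]_(p, n)) (mup : 'I_p -> nat) (mum : 'I_n -> nat) x (e : R) :
  inS Ap Am x -> ~ local_opt Ap Am C mup mum x -> 0 < e ->
  exists y, [/\ inS Ap Am y, forall j, `|y j - x j| < e &
    fobj C mup mum y < fobj C mup mum x].
Proof.
move=> x_in_S not_opt e_gt0; apply: NNPP => no_y; apply: not_opt; split=> //.
exists e; split=> // y y_in_S xy; rewrite leNgt; apply/negP => fy_lt.
by apply: no_y; exists y; split=> // j; rewrite distrC.
Qed.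

Theorem theorem1p1 (R : realType) (m n p : nat)
  (Ap Am : 'M[\bar R]_(m, n)) (C : 'M[\bar R]_(p, n))
  (mup : 'I_p -> nat) (mum : 'I_n -> nat) :
  (forall i j, rmax_entry (Ap i j)) ->
  (forall i j, rmax_entry (Am i j)) ->
  (forall k j, rmax_entry (C k j)) ->
  (forall i : 'I_m, exists j : 'I_n, Amax Ap Am i j != -oo%E) ->
  (forall k : 'I_p, exists j : 'I_n, C k j != -oo%E) ->
  (\sum_(k < p) mup k = \sum_(j < n) mum j)%N ->
  graph_connected (Amax Ap Am) C ->
  forall x : 'I_n -> R,
  inS Ap Am x ->
  ~ local_opt Ap Am C mup mum x ->
  exists (J : {set 'I_n}) (delta' : R), 0 < delta' /\
    forall delta : R, 0 < delta -> delta < delta' ->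
      inS Ap Am (fun j => x j + delta * chi R J j) /\
      fobj C mup mum (fun j => x j + delta * chi R J j) < fobj C mup mum x.
Proof.
move=> Ap_fin Am_fin C_fin _ C_row mu_sum _ x x_in_S not_opt.
have [e e_gt0 linear_near] :=
  locally_and (fobj_local mup mum x C_fin C_row) (inS_local Ap_fin Am_fin x_in_S).
have [y [y_in_S xy fy_lt]] := not_local_opt_descent x_in_S not_opt e_gt0.
have [J [J_cone J_desc]] :
    exists J, tangent_cone Ap Am x (chi R J) /\ dfobj C mup mum x (chi R J) < 0.
  apply: (indicator_descent (@tangent_cone_homo R m n Ap Am x)
    (dfobj_comonotoneD mup mum x C_row) (dfobj_scale mup mum x C_row)
    (dfobj_const x C_row mu_sum) (d := fun j => y j - x j)).
  - exact: (linear_near _ xy).2.1 y_in_S.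
  - by move: fy_lt; rewrite (linear_near _ xy).1; lra.
exists J, e; split=> // delta delta_gt0 delta_lt_e.
have step : (fun j => x j + delta * chi R J j - x j) = fun j => delta * chi R J j.
  by apply: functional_extensionality => j; rewrite addrAC subrr add0r.
have near_x j : `|x j + delta * chi R J j - x j| < e.
  by rewrite addrAC subrr add0r /chi; case: ifP; rewrite ?mulr1 ?mulr0 ?normr0 ?gtr0_norm.
split.
  apply/(linear_near _ near_x).2; rewrite step.
  by apply: tangent_cone_homo J_cone => a b ab; rewrite ler_pM2l.
rewrite (linear_near _ near_x).1 step dfobj_scale //.
have : delta * dfobj C mup mum x (chi R J) < 0 by rewrite pmulr_rlt0.
lra.
Qed.
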